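(* Let $t$ be a term with $\mathrm{ofv}(t)=\emptyset$. The following are equivalent: (1) $t$ is $\to_w$-normal; (2) $t$ is $\to_y$-normal; (3) $t$ is a strict answer, i.e. generated by $a_s ::= v\mid a_s[x\backslash a_s']$ with $x\in\mathrm{fv}(a_s)$.
   Context: Terms: $t ::= x \mid \lambda x.t \mid t\,u \mid t[x\backslash u]$ ($t[x\backslash u]$ an explicit substitution binding $x$ in $t$; terms up to $\alpha$). Values $v ::= \lambda x.t$. Shallow free variables: $\mathrm{ofv}(x)=\{x\}$, $\mathrm{ofv}(\lambda x.t)=\emptyset$, $\mathrm{ofv}(tu)=\mathrm{ofv}(t)\cup\mathrm{ofv}(u)$, $\mathrm{ofv}(t[x\backslash u])=(\mathrm{ofv}(t)\setminus\{x\})\cup\mathrm{ofv}(u)$. Substitution contexts $S ::= \langle\cdot\rangle\mid S[x\backslash u]$. Weak contexts $W ::= \langle\cdot\rangle \mid W\,t \mid t\,W \mid t[x\backslash W] \mid W[x\backslash u]$; for a class of contexts, $K\langle\langle t\rangle\rangle$ is plugging without capture of free variables of $t$. Root rules: $S\langle\lambda x.t\rangle u\mapsto_m S\langle t[x\backslash u]\rangle$; for a class of contexts $K$, $K\langle\langle x\rangle\rangle[x\backslash u]\mapsto_{e_K} K\langle\langle u\rangle\rangle[x\backslash u]$; $t[x\backslash S\langle v\rangle]\mapsto_{gcv} S\langle t\rangle$ if $x\notin\mathrm{fv}(t)$. $\to_w$ is the union of the closures under weak contexts of $\mapsto_m$, $\mapsto_{e_W}$ (with $K$ = weak contexts) and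 $\mapsto_{gcv}$. Call-by-silly strategy: answers $a ::= v\mid a[x\backslash a']$; name contexts $N ::= \langle\cdot\rangle\mid N t\mid N[x\backslash t]$; auxiliary contexts $A ::= \langle\cdot\rangle\mid a[x\backslash A]\mid A[x\backslash t]$; silly contexts $Y ::= A\langle N\rangle$. $\to_{ym} := Y\langle\mapsto_m\rangle$; $\to_{yeAY} := A\langle\mapsto_{e_Y}\rangle$; $\to_{yeYN} := Y\langle\mapsto_{e_N}\rangle$; $\to_{ygcv}:=Y\langle\mapsto_{gcv}\rangle$ (closures of the root rules under the indicated contexts); $\to_y$ is their union. *)

(* Terms of the linear substitution calculus with explicit
   substitutions, represented with de Bruijn indices (so terms are
   automatically taken up to alpha-equivalence). *)
From Stdlib Require Import Arith.

(* Var n | Lam t (binds 0 in t) | App t u | ES t u  =  t[x\u] (binds 0 in t) *)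
Inductive term : Type :=
| Var : nat -> term
| Lam : term -> term
| App : term -> term -> term
| ES  : term -> term -> term.

Definition is_value (t : term) : Prop := exists b, t = Lam b.

Fixpoint lift (k c : nat) (t : term) : term :=
  match t with
  | Var n => if Nat.leb c n then Var (n + k) else Var n
  | Lam b => Lam (lift k (S c) b)
  | App t1 t2 => App (lift k c t1) (lift k c t2)
  | ES t1 t2 => ES (lift k (S c) t1) (lift k c t2)
  end.

(* lower c t : decrease every index > c by one (used when index c does not occur) *)
Fixpoint lower (c : nat) (t : term) : term :=
  match t with
  | Var n => if Nat.ltb c n then Var (n - 1) else Var n
  | Lam b => Lam (lower (S c) b)
  | App t1 t2 => App (lower c t1) (lower c t2)
  | ES t1 t2 => ES (lower (S c) t1) (lower c t2)
  end.

Fixpoint fv_in (n : nat) (t : term) : Prop :=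
  match t with
  | Var m => m = n
  | Lam b => fv_in (S n) b
  | App t1 t2 => fv_in n t1 \/ fv_in n t2
  | ES t1 t2 => fv_in (S n) t1 \/ fv_in n t2
  end.

Fixpoint ofv_in (n : nat) (t : term) : Prop :=
  match t with
  | Var m => m = n
  | Lam _ => False
  | App t1 t2 => ofv_in n t1 \/ ofv_in n t2
  | ES t1 t2 => ofv_in (S n) t1 \/ ofv_in n t2
  end.

Inductive ctx : Type :=
| Hole : ctx
| CLam : ctx -> ctx
| CAppL : ctx -> term -> ctx
| CAppR : term -> ctx -> ctx
| CESL : ctx -> term -> ctx
| CESR : term -> ctx -> ctx.

(* ordinary plugging (may capture) *)
Fixpoint plug (C : ctx) (t : term) : term :=
  match C with
  | Hole => t
  | CLam C' => Lam (plug C' t)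
  | CAppL C' u => App (plug C' t) u
  | CAppR u C' => App u (plug C' t)
  | CESL C' u => ES (plug C' t) u
  | CESR u C' => ES u (plug C' t)
  end.

Fixpoint depth (C : ctx) : nat :=
  match C with
  | Hole => 0
  | CLam C' => S (depth C')
  | CAppL C' _ => depth C'
  | CAppR _ C' => depth C'
  | CESL C' _ => S (depth C')
  | CESR _ C' => depth C'
  end.

Fixpoint ccomp (C1 C2 : ctx) : ctx :=
  match C1 with
  | Hole => C2
  | CLam C' => CLam (ccomp C' C2)
  | CAppL C' u => CAppL (ccomp C' C2) u
  | CAppR u C' => CAppR u (ccomp C' C2)
  | CESL C' u => CESL (ccomp C' C2) u
  | CESR u C' => CESR u (ccomp C' C2)
  end.

Fixpoint isS (C : ctx) : Prop :=
  match C with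
  | Hole => True
  | CESL C' _ => isS C'
  | _ => False
  end.

Fixpoint isW (C : ctx) : Prop :=
  match C with
  | Hole => True
  | CLam _ => False
  | CAppL C' _ => isW C'
  | CAppR _ C' => isW C'
  | CESL C' _ => isW C'
  | CESR _ C' => isW C'
  end.

Inductive answer : term -> Prop :=
| ans_val : forall v, is_value v -> answer v
| ans_es : forall a a', answer a -> answer a' -> answer (ES a a').

Inductive strict_answer : term -> Prop :=
| sans_val : forall v, is_value v -> strict_answer v
| sans_es : forall a a', strict_answer a -> strict_answer a' ->
    fv_in 0 a -> strict_answer (ES a a').

Fixpoint isN (C : ctx) : Prop :=
  match C with
  | Hole => True
  | CAppL C' _ => isN C'
  | CESL C' _ => isN C'
  | _ => False
  end.

Fixpoint isA (C : ctx) : Prop :=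
  match C with
  | Hole => True
  | CESR a C' => answer a /\ isA C'
  | CESL C' _ => isA C'
  | _ => False
  end.

Definition isY (C : ctx) : Prop :=
  exists A N, isA A /\ isN N /\ C = ccomp A N.

Definition rel := term -> term -> Prop.

(* S<\x.t> u  |->_m  S<t[x\u]>   (u not captured by S) *)
Definition rule_m : rel := fun t1 t2 =>
  exists S b u, isS S /\ t1 = App (plug S (Lam b)) u /\
                t2 = plug S (ES b (lift (depth S) 0 u)).

(* K<<x>>[x\u]  |->_{e_K}  K<<u>>[x\u]  (no capture, for K in class P) *)
Definition rule_e (P : ctx -> Prop) : rel := fun t1 t2 =>
  exists K u, P K /\ t1 = ES (plug K (Var (depth K))) u /\
              t2 = ES (plug K (lift (S (depth K)) 0 u)) u.

(* t[x\S<v>]  |->_gcv  S<t>  if x notin fv(t) *)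
Definition rule_gcv : rel := fun t1 t2 =>
  exists b S v, isS S /\ is_value v /\ ~ fv_in 0 b /\
                t1 = ES b (plug S v) /\
                t2 = plug S (lift (depth S) 0 (lower 0 b)).

Definition closure (P : ctx -> Prop) (R : rel) : rel := fun t1 t2 =>
  exists C r1 r2, P C /\ R r1 r2 /\ t1 = plug C r1 /\ t2 = plug C r2.

Definition union (R1 R2 : rel) : rel := fun t1 t2 => R1 t1 t2 \/ R2 t1 t2.

Definition step_w : rel :=
  union (closure isW rule_m)
        (union (closure isW (rule_e isW)) (closure isW rule_gcv)).

Definition step_ym : rel := closure isY rule_m.
Definition step_yeAY : rel := closure isA (rule_e isY).
Definition step_yeYN : rel := closure isY (rule_e isN).
Definition step_ygcv : rel := closure isY rule_gcv.
Definition step_y : rel :=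
  union step_ym (union step_yeAY (union step_yeYN step_ygcv)).

Definition normal (R : rel) (t : term) : Prop := ~ exists u, R t u.

(* Both strategies reduce inside weak contexts, and silly contexts are weak,
   so ->_y is contained in ->_w.  A weak context around a strict answer only
   descends into the body or the argument of an explicit substitution, so
   every subterm at a weak position of a strict answer is again a strict
   answer; no root redex is one, hence strict answers are ->_w-normal.
   Conversely, walk down a ->_y-normal term with no shallow free variable
   along an auxiliary context A.  A variable at the head of a name context N
   is bound by a substitution of N or, by closedness, of A: an e-step.  An
   application exposes, after peeling off applications and substitutions, a
   variable (as before) or an abstraction under a substitution context: an
   m-step.  In t[x\u] both t and u are strict answers by induction, and if x
   did not occur in t this would be a gcv-redex. *)
From Stdlib Require Import Arith Lia.

Lemma plug_ccomp C1 C2 t : plug (ccomp C1 C2) t = plug C1 (plug C2 t).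
Proof. induction C1; simpl; congruence. Qed.

Lemma depth_ccomp C1 C2 : depth (ccomp C1 C2) = depth C1 + depth C2.
Proof. induction C1; simpl; lia. Qed.

Lemma ccomp_Hole_r C : ccomp C Hole = C.
Proof. induction C; simpl; congruence. Qed.

Lemma isS_ccomp C1 C2 : isS C1 -> isS C2 -> isS (ccomp C1 C2).
Proof. induction C1; simpl; tauto. Qed.

Lemma isN_ccomp C1 C2 : isN C1 -> isN C2 -> isN (ccomp C1 C2).
Proof. induction C1; simpl; tauto. Qed.

Lemma isN_ccomp_inv C1 C2 : isN (ccomp C1 C2) -> isN C1 /\ isN C2.
Proof. induction C1; simpl; tauto. Qed.

Lemma isA_ccomp C1 C2 : isA C1 -> isA C2 -> isA (ccomp C1 C2).
Proof. induction C1; simpl; tauto. Qed.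

Lemma isA_ccomp_inv C1 C2 : isA (ccomp C1 C2) -> isA C1 /\ isA C2.
Proof. induction C1; simpl; tauto. Qed.

Lemma isW_ccomp C1 C2 : isW C1 -> isW C2 -> isW (ccomp C1 C2).
Proof. induction C1; simpl; tauto. Qed.

Lemma isS_isN C : isS C -> isN C.
Proof. induction C; simpl; tauto. Qed.

Lemma isN_isW C : isN C -> isW C.
Proof. induction C; simpl; tauto. Qed.

Lemma isA_isW C : isA C -> isW C.
Proof. induction C; simpl; tauto. Qed.

Lemma isY_ccomp A N : isA A -> isN N -> isY (ccomp A N).
Proof. intros HA HN. exists A, N. auto. Qed.

Lemma isY_isA A : isA A -> isY A.
Proof. intro HA. rewrite <- (ccomp_Hole_r A). apply isY_ccomp; simpl; auto. Qed.

Lemma isY_isW C : isY C -> isW C.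
Proof.
  intros (A & N & HA & HN & ->).
  apply isW_ccomp; [apply isA_isW | apply isN_isW]; auto.
Qed.

Lemma fv_in_dec n t : fv_in n t \/ ~ fv_in n t.
Proof.
  revert n; induction t; intro m; simpl.
  - destruct (Nat.eq_dec n m); tauto.
  - apply IHt.
  - destruct (IHt1 m), (IHt2 m); tauto.
  - destruct (IHt1 (S m)), (IHt2 m); tauto.
Qed.

(* Since weak contexts contain no abstraction, [depth C] counts exactly the
   explicit substitutions above the hole. *)
Lemma isW_split_depth C k : isW C -> k < depth C ->
  exists C1 C2 u, C = ccomp C1 (CESL C2 u) /\ depth C2 = k.
Proof.
  induction C; simpl; intros HW Hk; try tauto; try lia.
  - destruct (IHC HW Hk) as (C1 & C2 & u & -> & Hd).
    exists (CAppL C1 t), C2, u; auto.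
  - destruct (IHC HW Hk) as (C1 & C2 & u & -> & Hd).
    exists (CAppR t C1), C2, u; auto.
  - destruct (Nat.eq_dec k (depth C)) as [->|Hne].
    + exists Hole, C, t; auto.
    + destruct (IHC HW ltac:(lia)) as (C1 & C2 & u & -> & Hd).
      exists (CESL C1 t), C2, u; auto.
  - destruct (IHC HW Hk) as (C1 & C2 & u & -> & Hd).
    exists (CESR t C1), C2, u; auto.
Qed.

Lemma ofv_in_plug_isW C n t :
  isW C -> ofv_in (depth C + n) t -> ofv_in n (plug C t).
Proof.
  revert n; induction C; simpl; intros n HW H; try tauto.
  - left; auto.
  - right; auto.
  - left. apply IHC; auto. now rewrite Nat.add_succ_r.
  - right; auto.
Qed.

Lemma step_y_step_w t u : step_y t u -> step_w t u.
Proof.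
  intros [H|[H|[H|H]]]; destruct H as (C & r1 & r2 & HC & HR & -> & ->).
  - left. exists C, r1, r2. auto using isY_isW.
  - right; left. exists C, r1, r2. repeat split; auto using isA_isW.
    destruct HR as (K & v & HK & HR). exists K, v. auto using isY_isW.
  - right; left. exists C, r1, r2. repeat split; auto using isY_isW.
    destruct HR as (K & v & HK & HR). exists K, v. auto using isN_isW.
  - right; right. exists C, r1, r2. auto using isY_isW.
Qed.

Lemma strict_answer_answer t : strict_answer t -> answer t.
Proof. induction 1; [apply ans_val | apply ans_es]; auto. Qed.

Lemma answer_plug_value t : answer t ->
  exists S v, isS S /\ is_value v /\ t = plug S v.
Proof.
  induction 1 as [v Hv|a a' _ IHa _ _].
  - exists Hole, v; simpl; auto.
  - destruct IHa as (S & v & HS & Hv & ->).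
    exists (CESL S a'), v; simpl; auto.
Qed.

Lemma strict_answer_not_Var n : ~ strict_answer (Var n).
Proof. intro H. inversion H as [v [b Hb]|]. discriminate. Qed.

Lemma strict_answer_not_App t u : ~ strict_answer (App t u).
Proof. intro H. inversion H as [v [b Hb]|]. discriminate. Qed.

Lemma strict_answer_ES_inv t u :
  strict_answer (ES t u) -> strict_answer t /\ strict_answer u /\ fv_in 0 t.
Proof. intro H. inversion H as [v [b Hb]|]; [discriminate | auto]. Qed.

Lemma strict_answer_plug_isW C t :
  isW C -> strict_answer (plug C t) -> strict_answer t.
Proof.
  induction C; simpl; intros HW Hs; try tauto.
  - now apply strict_answer_not_App in Hs.
  - now apply strict_answer_not_App in Hs.
  - apply IHC; auto. apply (strict_answer_ES_inv _ _ Hs).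
  - apply IHC; auto. apply (strict_answer_ES_inv _ _ Hs).
Qed.

Lemma strict_answer_normal_w t : strict_answer t -> normal step_w t.
Proof.
  intros Hs [u Hu].
  destruct Hu as [H|[H|H]]; destruct H as (C & r1 & r2 & HC & HR & -> & _);
    apply strict_answer_plug_isW in Hs; auto.
  - destruct HR as (S & b & v & _ & -> & _). now apply strict_answer_not_App in Hs.
  - destruct HR as (K & v & HK & -> & _).
    apply strict_answer_ES_inv, proj1, strict_answer_plug_isW in Hs; auto.
    now apply strict_answer_not_Var in Hs.
  - destruct HR as (b & S & v & _ & _ & Hb & -> & _).
    apply Hb, (strict_answer_ES_inv _ _ Hs).
Qed.

Definition reducible_y (t : term) : Prop := exists u, step_y t u.

Section SillyReducibility.

Variable A : ctx.
Hypothesis HA : isA A.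

(* The variable is bound either inside N (a ->_yeYN step) or, as the term has
   no shallow free variable, inside A (a ->_yeAY step). *)
Lemma reducible_y_var N k : isN N ->
  (forall x, ~ ofv_in x (plug A (plug N (Var k)))) ->
  reducible_y (plug A (plug N (Var k))).
Proof.
  intros HN Hc.
  destruct (le_lt_dec (depth N) k) as [Hle|Hlt].
  - destruct (le_lt_dec (depth A) (k - depth N)) as [Hle'|Hlt'].
    + exfalso. apply (Hc (k - depth N - depth A)).
      apply ofv_in_plug_isW; [now apply isA_isW|].
      apply ofv_in_plug_isW; [now apply isN_isW|]. simpl. lia.
    + destruct (isW_split_depth A (k - depth N) (isA_isW A HA) Hlt')
        as (A1 & A2 & u & -> & Hd).
      destruct (isA_ccomp_inv _ _ HA) as [HA1 HA2]; simpl in HA2.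
      eexists. right; left.
      exists A1, (ES (plug (ccomp A2 N) (Var (depth (ccomp A2 N)))) u),
        (ES (plug (ccomp A2 N) (lift (S (depth (ccomp A2 N))) 0 u)) u).
      split; auto. split.
      * exists (ccomp A2 N), u. split; [apply isY_ccomp; auto | eauto].
      * rewrite !plug_ccomp, depth_ccomp. simpl.
        replace (depth A2 + depth N) with k by lia. auto.
  - destruct (isW_split_depth N k (isN_isW N HN) Hlt)
      as (N1 & N2 & u & -> & <-).
    destruct (isN_ccomp_inv _ _ HN) as [HN1 HN2]; simpl in HN2.
    eexists. right; right; left.
    exists (ccomp A N1), (ES (plug N2 (Var (depth N2))) u),
      (ES (plug N2 (lift (S (depth N2)) 0 u)) u).
    split; [apply isY_ccomp; auto|]. split.
    + exists N2, u. eauto.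
    + rewrite !plug_ccomp. auto.
Qed.

Lemma reducible_y_app N S t u : isN N -> isS S ->
  (forall x, ~ ofv_in x (plug A (plug N (App (plug S t) u)))) ->
  reducible_y (plug A (plug N (App (plug S t) u))).
Proof.
  revert N S u; induction t as [k|b _|t1 IH1 t2 _|t1 IH1 t2 _];
    intros N S u HN HS Hc.
  - pose proof (reducible_y_var (ccomp N (CAppL S u)) k) as Hvar.
    rewrite !plug_ccomp in Hvar. apply Hvar; auto.
    apply isN_ccomp; simpl; auto using isS_isN.
  - eexists. left.
    exists (ccomp A N), (App (plug S (Lam b)) u),
      (plug S (ES b (lift (depth S) 0 u))).
    split; [apply isY_ccomp; auto|]. split.
    + exists S, b, u; eauto.
    + rewrite !plug_ccomp; auto.
  - pose proof (IH1 (ccomp N (CAppL S u)) Hole t2) as Happ.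
    rewrite !plug_ccomp in Happ. apply Happ; simpl; auto.
    apply isN_ccomp; simpl; auto using isS_isN.
  - pose proof (IH1 N (ccomp S (CESL Hole t2)) u) as Hes.
    rewrite !plug_ccomp in Hes. apply Hes; auto.
    apply isS_ccomp; simpl; auto.
Qed.

End SillyReducibility.

Lemma normal_y_strict_answer A t : isA A ->
  (forall x, ~ ofv_in x (plug A t)) -> normal step_y (plug A t) ->
  strict_answer t.
Proof.
  revert A; induction t as [k|b|t1 _ t2 _|t1 IH1 t2 IH2]; intros A HA Hc Hn.
  - exfalso. apply Hn, (reducible_y_var A HA Hole); simpl; auto.
  - apply sans_val. now exists b.
  - exfalso. apply Hn, (reducible_y_app A HA Hole Hole); simpl; auto.
  - assert (Ht1 : strict_answer t1).
    { apply (IH1 (ccomp A (CESL Hole t2))); rewrite ?plug_ccomp; auto.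
      apply isA_ccomp; simpl; auto. }
    assert (Ht2 : strict_answer t2).
    { apply (IH2 (ccomp A (CESR t1 Hole))); rewrite ?plug_ccomp; auto.
      apply isA_ccomp; simpl; auto using strict_answer_answer. }
    apply sans_es; auto.
    destruct (fv_in_dec 0 t1) as [|Hfv]; auto.
    exfalso. apply Hn.
    destruct (answer_plug_value t2 (strict_answer_answer _ Ht2))
      as (S & v & HS & Hv & ->).
    eexists. right; right; right.
    exists A, (ES t1 (plug S v)), (plug S (lift (depth S) 0 (lower 0 t1))).
    split; [now apply isY_isA|]. split; [|eauto].
    exists t1, S, v. auto.
Qed.

Theorem lemma11p3 (t : term) :
  (forall x, ~ ofv_in x t) ->
  (normal step_w t <-> normal step_y t) /\
  (normal step_y t <-> strict_answer t).
Proof.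
  intros Hc.
  assert (Hwy : normal step_w t -> normal step_y t).
  { intros Hw [u Hu]. apply Hw. exists u. now apply step_y_step_w. }
  assert (Hys : normal step_y t -> strict_answer t).
  { apply (normal_y_strict_answer Hole); simpl; auto. }
  pose proof (strict_answer_normal_w t).
  tauto.
Qed.
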